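(* There exist a rational polyhedron $P=\{x\in\mathbb{R}^n: Ax\le b,\ 0\le x_i\le u_i \text{ for } i\in I\}$, with $I=\{1,\dots,l\}$ the index set of integer variables, and a binarization scheme $\mathcal{B}=(B^1,\dots,B^l)$ in which every $B^i$ is a non-affine binarization polytope, such that \[\mathrm{SC}(P,I)\subsetneq\operatorname{proj}_x\big(\mathrm{SC}(P_{\mathcal{B}},I')\big),\qquad\text{where } I'=I_{\mathcal{B}}\setminus I.\]
   Context: Binarization polytopes: for positive integers $q,u$, $\Gamma^q_u$ is the set of rational polytopes $B\subseteq\{(x,z)\in\mathbb{R}\times[0,1]^q:0\le x\le u\}$ with $\operatorname{proj}_x(B\cap(\mathbb{R}\times\{0,1\}^q))=\{0,1,\dots,u\}$. $B\in\Gamma^q_u$ is affine if there are $\alpha\in\mathbb{R}^q$, $\alpha_0\in\mathbb{R}$ with $x=\alpha^Tz+\alpha_0$ for all $(x,z)\in B$. A binarization scheme is $\mathcal{B}=(B^1,\dots,B^l)$ with $B^i\in\Gamma^{q_i}_{u_i}$; with $q=\sum_iq_i$, $P_{\mathcal{B}}=\{(x,z)\in\mathbb{R}^n\times\mathbb{R}^q: x\in P,\ (x_i,z_i)\in B^i\text{ for } i\in I\}$ where $z=(z_1,\dots,z_l)$, $z_i\in\mathbb{R}^{q_i}$, and $I_{\mathcal{B}}=\{1,\dots,l,n+1,\dots,n+q\}$; thus $I'=\{n+1,\dots,n+q\}$ indexes only the new variables. Split closure: for $J\subseteq\{1,\dots,N\}$ and $X\subseteq\mathbb{R}^N$, $\mathrm{SC}(X,J)=\bigcap\mathrm{conv}(X\setminus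 S)$ over all $S=\{y:\pi_0<\pi^Ty<\pi_0+1\}$ with $\pi\in\mathbb{Z}^N$, $\pi_j=0$ for $j\notin J$, $\pi_0\in\mathbb{Z}$. $\operatorname{proj}_x$ is orthogonal projection onto the $x$-coordinates. *)

From HB Require Import structures.
From mathcomp Require Import all_boot all_order all_algebra.
From mathcomp Require Import Rstruct.
From Stdlib Require Rdefinitions.
Set Implicit Arguments. Unset Strict Implicit. Unset Printing Implicit Defensive.
Import Order.TTheory GRing.Theory Num.Theory.
Local Open Scope ring_scope.

Notation R := Rdefinitions.R.
Notation pt T := (T -> R).

Definition conv (T : finType) (X : pt T -> Prop) : pt T -> Prop :=
  fun y => exists (k : nat) (p : 'I_k -> pt T) (lam : 'I_k -> R),
    (forall s, X (p s)) /\ (forall s, 0 <= lam s) /\ (\sum_(s < k) lam s = 1) /\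
    (forall t, y t = \sum_(s < k) lam s * p s t).

Definition split_set (T : finType) (pi : T -> int) (pi0 : int) : pt T -> Prop :=
  fun y => (pi0%:~R < \sum_t (pi t)%:~R * y t) /\ (\sum_t (pi t)%:~R * y t < pi0%:~R + 1).

Definition SC (T : finType) (X : pt T -> Prop) (J : pred T) : pt T -> Prop :=
  fun y => forall (pi : T -> int) (pi0 : int), (forall j, ~~ J j -> pi j = 0) ->
    conv (fun w => X w /\ ~ split_set pi pi0 w) y.

Definition rat_polyhedron (T : finType) (X : pt T -> Prop) : Prop :=
  exists (m : nat) (C : 'I_m -> T -> rat) (d : 'I_m -> rat),
    forall y, X y <-> (forall r, \sum_t ratr (C r t) * y t <= ratr (d r)).

Definition bounded (T : finType) (X : pt T -> Prop) : Prop :=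
  exists M : R, forall y, X y -> forall t, `|y t| <= M.

Definition rat_polytope (T : finType) (X : pt T -> Prop) : Prop :=
  rat_polyhedron X /\ bounded X.

(* Binarization polytopes Gamma^q_u: points (x, z) in R x R^q are encoded as
   functions option 'I_q -> R, with None the x-coordinate and Some j the z_j. *)
Definition binarization_polytope (q u : nat) (B : pt (option 'I_q) -> Prop) : Prop :=
  rat_polytope B /\
  (forall y, B y -> (0 <= y None <= u%:R) /\ (forall j, 0 <= y (Some j) <= 1)) /\
  (forall x : R,
     (exists y, B y /\ (forall j, y (Some j) = 0 \/ y (Some j) = 1) /\ y None = x)
     <-> (exists k : nat, (k <= u)%N /\ x = k%:R)).

Definition affine_binpoly (q : nat) (B : pt (option 'I_q) -> Prop) : Prop :=
  exists (alpha : 'I_q -> R) (alpha0 : R),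
    forall y, B y -> y None = \sum_j alpha j * y (Some j) + alpha0.

(* The rational polyhedron P = {x in R^n : A x <= b, 0 <= x_i <= u_i, i in I},
   I = {0,..,l-1} (0-based), given l <= n. *)
Definition polyhedronP (n l m : nat) (hl : (l <= n)%N) (A : 'I_m -> 'I_n -> rat)
  (b : 'I_m -> rat) (u : 'I_l -> nat) : pt 'I_n -> Prop :=
  fun x => (forall r, \sum_j ratr (A r j) * x j <= ratr (b r)) /\
           (forall i : 'I_l, 0 <= x (widen_ord hl i) <= (u i)%:R).

(* Index type of the extended space R^n x R^q, q = sum_i q_i:
   inl j is x_j, inr (Tagged i k) is the k-th component of z_i. *)
Definition extidx (n l : nat) (q : 'I_l -> nat) : finType :=
  ('I_n + {i : 'I_l & 'I_(q i)})%type.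

Definition binPB (n l : nat) (hl : (l <= n)%N) (P : pt 'I_n -> Prop)
  (q : 'I_l -> nat) (B : forall i : 'I_l, pt (option 'I_(q i)) -> Prop)
  : pt (extidx n q) -> Prop :=
  fun y => P (fun j => y (inl j)) /\
    forall i : 'I_l,
      B i (fun o => match o with
                    | None => y (inl (widen_ord hl i))
                    | Some k => y (inr (Tagged (fun i => 'I_(q i)) k))
                    end).

Definition newidx (n l : nat) (q : 'I_l -> nat) : pred (extidx n q) :=
  fun t => match t with inl _ => false | inr _ => true end.

Definition proj_x (n l : nat) (q : 'I_l -> nat) (S : pt (extidx n q) -> Prop)
  : pt 'I_n -> Prop :=
  fun x => exists y, S y /\ forall j, y (inl j) = x j.

(* Take P = [0, 1/2] with x integral. The split 0 < x < 1 leaves only x = 0 in P,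
   so SC(P, I) = {0}. Binarize x by the tetrahedron
   B = conv{(0,0,0), (1,1,0), (1,0,1), (0,1,1)} in (x, z1, z2), which is not affine
   because its four vertices are affinely independent. The point (1/2, 1/2, 1/2)
   survives every split a z1 + b z2 on the new variables: for a even it is the
   midpoint of (1/2,1/2,0) and (1/2,1/2,1), on which a z1 + b z2 is integral; for b
   even symmetrically; for a, b both odd, a/2 + b/2 is itself an integer. Hence
   x = 1/2 lies in proj_x SC(P_B, I') but not in SC(P, I). *)

From HB Require Import structures.
From mathcomp Require Import all_boot all_order all_algebra.
From mathcomp Require Import Rstruct.
From mathcomp Require Import lra zify.
Set Implicit Arguments. Unset Strict Implicit. Unset Printing Implicit Defensive.
Import Order.TTheory GRing.Theory Num.Theory.
Local Open Scope ring_scope.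

Definition zdot (T : finType) (pi : T -> int) (w : pt T) : R :=
  \sum_t (pi t)%:~R * w t.

Lemma int_zdot_not_split (T : finType) (pi : T -> int) pi0 (w : pt T) :
  zdot pi w \is a Num.int -> ~ split_set pi pi0 w.
Proof.
move=> /intrP[e]; rewrite /split_set -/(zdot pi w) => -> [].
rewrite -[_ + 1](rmorphD _ pi0 1) /= !ltr_int; lia.
Qed.

Lemma zdot_comp (T T' : finType) (sel : T' -> T) (pi : T' -> int) (w : pt T) :
  zdot pi (w \o sel) = zdot (fun t => \sum_(t' | sel t' == t) pi t') w.
Proof.
rewrite /zdot (partition_big sel xpredT) //=; apply: eq_bigr => t _.
rewrite rmorph_sum /= mulr_suml; by apply: eq_bigr => t' /eqP <-.
Qed.

Lemma conv_comp (T T' : finType) (sel : T' -> T) (X : pt T -> Prop)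
    (Y : pt T' -> Prop) (y : pt T) :
  (forall w, X w -> Y (w \o sel)) -> conv X y -> conv Y (y \o sel).
Proof.
move=> XY [k [p [lam [Xp [lam_ge0 [lam_sum1 yE]]]]]].
exists k, (fun s => p s \o sel), lam; do !split => //.
- by move=> s; apply: XY.
- by move=> t; apply: yE.
Qed.

Lemma SC_comp (T T' : finType) (sel : T' -> T) (X : pt T -> Prop) (J : pred T)
    (Y : pt T' -> Prop) (J' : pred T') (y : pt T) :
  (forall w, X w -> Y (w \o sel)) ->
  (forall pi : T' -> int, (forall j, ~~ J' j -> pi j = 0) ->
     forall t, ~~ J t -> \sum_(t' | sel t' == t) pi t' = 0) ->
  SC X J y -> SC Y J' (y \o sel).
Proof.
move=> XY Jsel Xy pi pi0 piJ'.
apply: conv_comp (Xy _ pi0 (Jsel _ piJ')) => w [/XY Yw w_nsplit]; split=> //.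
by rewrite /split_set -/(zdot pi _) zdot_comp.
Qed.

Lemma conv_coord_const (T : finType) (X : pt T -> Prop) (t : T) (c : R) y :
  (forall w, X w -> w t = c) -> conv X y -> y t = c.
Proof.
move=> Xc [k [p [lam [Xp [_ [lam_sum1 ->]]]]]].
by rewrite (eq_bigr (fun s => lam s * c)) => [|s _]; rewrite ?Xc // -mulr_suml lam_sum1 mul1r.
Qed.

Lemma SC_of_integral_midpoints (T : finType) (X : pt T -> Prop) (J : pred T) y :
  (forall pi : T -> int, (forall j, ~~ J j -> pi j = 0) ->
     exists p1 p2, [/\ X p1, X p2, zdot pi p1 \is a Num.int,
                       zdot pi p2 \is a Num.int & forall t, y t = (p1 t + p2 t) / 2]) ->
  SC X J y.
Proof.
move=> mid pi pi0 /mid[p1 [p2 [Xp1 Xp2 int1 int2 yE]]].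
exists 2%N, (fun s => if s == ord0 then p1 else p2), (fun _ => 2^-1).
split; first by move=> s; case: ifP => _; split=> //; apply: int_zdot_not_split.
split; first by move=> _; lra.
split; first by rewrite big_ord_recl big_ord1; lra.
by move=> t; rewrite big_ord_recl big_ord1 /= yE; lra.
Qed.

Lemma SC_of_integral_point (T : finType) (X : pt T -> Prop) (J : pred T) y :
  X y -> (forall pi : T -> int, (forall j, ~~ J j -> pi j = 0) ->
            zdot pi y \is a Num.int) ->
  SC X J y.
Proof.
move=> Xy yint; apply: SC_of_integral_midpoints => pi /yint yint_pi.
by exists y, y; split => // t; lra.
Qed.

Lemma sum_option2 (f : option 'I_2 -> R) :
  \sum_t f t = f None + f (Some ord0) + f (Some ord_max).
Proof.
rewrite (bigD1 None) //= (bigD1 (Some ord0)) //= (bigD1 (Some ord_max)) //= big_pred0.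
  by rewrite addr0 !addrA.
by case=> [[[|[|k]] Hk]|] //=.
Qed.

(* The tetrahedron conv{(0,0,0), (1,1,0), (1,0,1), (0,1,1)} in the coordinates
   (x, z1, z2); its vertices are exactly its 0/1 points. *)
Definition tetra (w : pt (option 'I_2)) : Prop :=
  let x := w None in let z1 := w (Some ord0) in let z2 := w (Some ord_max) in
  [/\ x + z1 + z2 <= 2, z2 <= x + z1, z1 <= x + z2 & x <= z1 + z2].

(* Row r lists the coefficients of (x, z1, z2) in the r-th facet inequality of [tetra]. *)
Definition tetra_coef (r : 'I_4) (t : option 'I_2) : rat :=
  nth 0 (nth [::] [:: [:: 1; 1; 1]; [:: -1; -1; 1]; [:: -1; 1; -1]; [:: 1; -1; -1]] r)
    (if t is Some k then k.+1 else 0%N).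

Definition tetra_rhs (r : 'I_4) : rat := if r == ord0 then 2 else 0.

Lemma tetra_ineqs w :
  (forall r, \sum_t ratr (tetra_coef r t) * w t <= ratr (tetra_rhs r)) <-> tetra w.
Proof.
have row r : \sum_t ratr (tetra_coef r t) * w t <= ratr (tetra_rhs r) =
    (ratr (tetra_coef r None) * w None + ratr (tetra_coef r (Some ord0)) * w (Some ord0)
     + ratr (tetra_coef r (Some ord_max)) * w (Some ord_max) <= ratr (tetra_rhs r)).
  by rewrite sum_option2.
split=> [ineq | [h0 h1 h2 h3]].
  have := ineq 0; have := ineq 1; have := ineq 2; have := ineq 3.
  rewrite !row /tetra_coef /tetra_rhs /= ?rmorph1 ?rmorphN1 ?rmorph0 ?ratr_nat.
  move=> *; split; lra.
case=> [[|[|[|[|r]]]] Hr] //; rewrite row /tetra_coef /tetra_rhs /=;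
  rewrite ?rmorph1 ?rmorphN1 ?rmorph0 ?ratr_nat; lra.
Qed.

Lemma tetra_bounds w : tetra w -> forall t, 0 <= w t <= 1.
Proof.
case=> h0 h1 h2 h3 [[[|[|k]] Hk]|] //=.
- by rewrite (_ : Ordinal Hk = ord0); [lra | apply: val_inj].
- by rewrite (_ : Ordinal Hk = ord_max); [lra | apply: val_inj].
- lra.
Qed.

Definition tpt (x z1 z2 : R) : pt (option 'I_2) :=
  fun t => if t is Some k then (if val k == 0%N then z1 else z2) else x.

Lemma tetra_binarization : binarization_polytope 1 tetra.
Proof.
split; [split | split].
- by exists 4%N, tetra_coef, tetra_rhs => w; apply: iff_sym; apply: tetra_ineqs.
- by exists 1 => w /tetra_bounds w01 t; have := w01 t; rewrite ler_norml; lra.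
- by move=> w /tetra_bounds w01; split=> [|j]; apply: w01.
move=> x; split.
  case=> w [[h0 h1 h2 h3] [w01 <-]].
  case: (w01 ord0) => z1E; case: (w01 ord_max) => z2E; rewrite z1E z2E in h0 h1 h2 h3.
  - by exists 0%N; split=> //; lra.
  - by exists 1%N; split=> //; lra.
  - by exists 1%N; split=> //; lra.
  - by exists 0%N; split=> //; lra.
case=> [[|[|k]]] [//= _ ->].
  exists (tpt 0 0 0); rewrite /tetra /=; do !split; try lra.
  by move=> j; case: ifP; left.
exists (tpt 1 1 0); rewrite /tetra /=; do !split; try lra.
by move=> j; case: ifP; [right | left].
Qed.

Lemma tetra_not_affine : ~ affine_binpoly tetra.
Proof.
case=> alpha [alpha0 xE].
have [v000 v110 v101 v011] : [/\ tetra (tpt 0 0 0), tetra (tpt 1 1 0),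
                                 tetra (tpt 1 0 1) & tetra (tpt 0 1 1)].
  by rewrite /tetra /=; do !split; lra.
move: (xE _ v000) (xE _ v110) (xE _ v101) (xE _ v011).
rewrite !big_ord_recl !big_ord0 /=; lra.
Qed.

Lemma int_even_or_odd (a : int) : exists c, a = c * 2 \/ a = c * 2 + 1.
Proof.
exists (a %/ 2)%Z; have := divz_eq a 2; have := modz_ge0 a (isT : (2:int) != 0).
have := ltz_pmod a (isT : (0 < 2 :> int)); lia.
Qed.

Lemma zdot_tpt (pi : option 'I_2 -> int) x z1 z2 : pi None = 0 ->
  zdot pi (tpt x z1 z2) = (pi (Some ord0))%:~R * z1 + (pi (Some ord_max))%:~R * z2.
Proof. by move=> pi0; rewrite /zdot sum_option2 pi0 mul0r add0r. Qed.

Definition tetra_half (w : pt (option 'I_2)) : Prop := tetra w /\ 0 <= w None <= 2^-1.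

Lemma SC_tetra_half_origin : SC tetra_half (fun t => t != None) (tpt 0 0 0).
Proof.
apply: SC_of_integral_point => [|pi /(_ None isT) pi0].
  by split; [rewrite /tetra /=; split; lra | rewrite /=; lra].
by rewrite zdot_tpt // !mulr0 addr0 int_num0.
Qed.

Lemma SC_tetra_half_center :
  SC tetra_half (fun t => t != None) (tpt 2^-1 2^-1 2^-1).
Proof.
apply: SC_of_integral_midpoints => pi /(_ None isT) pi0.
have mem z1 z2 : [/\ 2^-1 + z1 + z2 <= 2, z2 <= 2^-1 + z1, z1 <= 2^-1 + z2 & 2^-1 <= z1 + z2] ->
    tetra_half (tpt 2^-1 z1 z2).
  by move=> ?; split=> //=; lra.
have [c [aE|aE]] := int_even_or_odd (pi (Some ord0)).
  exists (tpt 2^-1 2^-1 0), (tpt 2^-1 2^-1 1); split.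
  - by apply: mem; split; lra.
  - by apply: mem; split; lra.
  - by apply/intrP; exists c; rewrite zdot_tpt // aE rmorphM /=; lra.
  - by apply/intrP; exists (c + pi (Some ord_max)); rewrite zdot_tpt // aE rmorphD rmorphM /=; lra.
  - by case=> [k|] /=; [case: ifP|]; lra.
have [d [bE|bE]] := int_even_or_odd (pi (Some ord_max)).
  exists (tpt 2^-1 0 2^-1), (tpt 2^-1 1 2^-1); split.
  - by apply: mem; split; lra.
  - by apply: mem; split; lra.
  - by apply/intrP; exists d; rewrite zdot_tpt // bE rmorphM /=; lra.
  - by apply/intrP; exists (pi (Some ord0) + d); rewrite zdot_tpt // bE rmorphD rmorphM /=; lra.
  - by case=> [k|] /=; [case: ifP|]; lra.
have center_int : zdot pi (tpt 2^-1 2^-1 2^-1) \is a Num.int.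
  by apply/intrP; exists (c + d + 1); rewrite zdot_tpt // aE bE !rmorphD !rmorphM /=; lra.
exists (tpt 2^-1 2^-1 2^-1), (tpt 2^-1 2^-1 2^-1); split=> //.
- by apply: mem; split; lra.
- by apply: mem; split; lra.
- by move=> t; lra.
Qed.

Definition P_half : pt 'I_1 -> Prop :=
  polyhedronP (leqnn 1) (fun (_ : 'I_1) _ => 1) (fun _ => 2^-1) (fun _ => 1%N).

Lemma P_halfE (x : pt 'I_1) : P_half x <-> 0 <= x ord0 <= 2^-1.
Proof.
have ratr_half : ratr (2^-1 : rat) = 2^-1 :> R by rewrite fmorphV /= ratr_nat.
have widen0 i : widen_ord (leqnn 1) i = ord0 by apply: val_inj; rewrite /= (ord1 i).
rewrite /P_half /polyhedronP; split.
  case=> /(_ ord0) + /(_ ord0).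
  by rewrite big_ord1 rmorph1 ratr_half widen0 mul1r => ? /andP[? ?]; apply/andP; split; lra.
move=> /andP[x_ge0 x_le]; split=> [r | i]; last by rewrite widen0 x_ge0 /=; lra.
by rewrite big_ord1 rmorph1 ratr_half mul1r.
Qed.

Lemma SC_P_half x : SC P_half [pred j : 'I_1 | (j < 1)%N] x -> x ord0 = 0.
Proof.
have admissible j : ~~ [pred j : 'I_1 | (j < 1)%N] j -> (1 : int) = 0 by rewrite inE ltn_ord.
move=> /(_ (fun _ => 1) 0 admissible); apply: conv_coord_const.
move=> w [/P_halfE w_half]; rewrite /split_set big_ord1 mulr0z mulr1z mul1r add0r.
lra.
Qed.

Definition q2 : 'I_1 -> nat := fun _ => 2%N.

(* [w \o sel] places the point w = (x, z1, z2) into R^1 x R^2; this map identifies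
   [tetra_half] with the binarized polytope P_B. *)
Definition sel (t : extidx 1 q2) : option 'I_2 :=
  if t is inr p then Some (tagged p) else None.

Lemma binPB_sel w : tetra_half w -> binPB (leqnn 1) P_half (fun _ => tetra) (w \o sel).
Proof. by case=> tw w_half; split=> [|i //]; apply/P_halfE. Qed.

Lemma SC_binPB_sel y : SC tetra_half (fun t => t != None) y ->
  SC (binPB (leqnn 1) P_half (fun _ => tetra)) (@newidx 1 1 q2) (y \o sel).
Proof.
apply: SC_comp => [|pi piJ]; first exact: binPB_sel.
by case=> // _; apply: big1 => t; case: t => [j _|//]; apply: piJ.
Qed.

Theorem proposition1 :
  exists (n l m : nat) (hl : (l <= n)%N) (A : 'I_m -> 'I_n -> rat) (b : 'I_m -> rat)
         (u : 'I_l -> nat) (q : 'I_l -> nat)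
         (B : forall i : 'I_l, pt (option 'I_(q i)) -> Prop),
    (forall i, (0 < u i)%N /\ (0 < q i)%N) /\
    (forall i, binarization_polytope (u i) (B i) /\ ~ affine_binpoly (B i)) /\
    let P := polyhedronP hl A b u in
    let I := [pred j : 'I_n | (j < l)%N] in
    (forall x, SC P I x -> proj_x (SC (binPB hl P B) (@newidx n l q)) x) /\
    (exists x, proj_x (SC (binPB hl P B) (@newidx n l q)) x /\ ~ SC P I x).
Proof.
exists 1%N, 1%N, 1%N, (leqnn 1), (fun _ _ => 1), (fun _ => 2^-1), (fun _ => 1%N), q2,
  (fun _ => tetra).
split; first by [].
split; first by split; [exact: tetra_binarization | exact: tetra_not_affine].
move=> P I; split.
  move=> x /SC_P_half x0; exists (tpt 0 0 0 \o sel).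
  by split=> [|j]; [exact: SC_binPB_sel SC_tetra_half_origin | rewrite (ord1 j) x0].
exists (fun _ => 2^-1); split; last by move/SC_P_half; lra.
by exists (tpt 2^-1 2^-1 2^-1 \o sel); split=> //; exact: SC_binPB_sel SC_tetra_half_center.
Qed.
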